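(* Let $K\in\mathbb{N}^+$ and let $\varrho:\mathbb{R}\to\mathbb{R}$ be real analytic and not a polynomial on an interval $(\alpha,\beta)$ with $\beta>\alpha$. Then there exists $w_0\in\big(-\tfrac{\beta-\alpha}{2K},\tfrac{\beta-\alpha}{2K}\big)$ such that the numbers $\varrho\big(\tfrac{\alpha+\beta}{2}+kw_0\big)$, $k=1,2,\dots,K$, are rationally independent.
   Context: Real numbers $a_1,\dots,a_K$ are rationally independent if the only $(\lambda_1,\dots,\lambda_K)\in\mathbb{Q}^K$ with $\sum_{k=1}^K\lambda_k a_k=0$ is $(0,\dots,0)$. *)

From Stdlib Require Import Reals QArith List.
Open Scope R_scope.

Definition real_analytic_on (rho : R -> R) (a b : R) : Prop :=
  forall x0, a < x0 < b ->
    exists r, 0 < r /\ exists c : nat -> R,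
      forall x, Rabs (x - x0) < r -> Pser c (x - x0) (rho x).

Definition polynomial_on (rho : R -> R) (a b : R) : Prop :=
  exists (n : nat) (c : nat -> R),
    forall x, a < x < b -> rho x = sum_f_R0 (fun i => c i * x ^ i) n.

Definition rationally_independent (a : nat -> R) (K : nat) : Prop :=
  forall lam : nat -> Q,
    fold_right Rplus 0 (map (fun k => Q2R (lam k) * a k) (seq 1 K)) = 0 ->
    forall k, (1 <= k <= K)%nat -> (lam k == 0)%Q.

From Stdlib Require Import Reals QArith Qreals List Arith Lra Lia Cantor Classical ClassicalEpsilon.
From Coquelicot Require Import Coquelicot.
Open Scope R_scope.

(* Suppose no w0 works, and put m = (alpha + beta) / 2, d = (beta - alpha) / (2 K).
   Every w in (-d, d) then satisfies a nontrivial rational relation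
   G_lam(w) = sum_k lam_k rho(m + k w) = 0.  There are only countably many lam, so by a
   nested-interval (Baire) argument the zeros of one fixed G_lam cluster at a point of (-d, d).
   Being analytic, G_lam has all derivatives zero there, hence (by connectedness) on all of
   (-d, d), in particular at 0, where G_lam^(n)(0) = rho^(n)(m) * sum_k lam_k k^n.  These power
   sums are nonzero for large n (the largest k with lam_k <> 0 dominates), so rho^(n)(m) = 0 for
   large n, and the same connectedness argument makes rho a polynomial on (alpha, beta). *)

(** * Local power series expansions *)

Definition has_pseries_on (f : R -> R) (x r : R) (c : nat -> R) : Prop :=
  forall y, Rabs (y - x) < r -> is_pseries c (y - x) (f y).

Definition analytic_at (f : R -> R) (x : R) : Prop :=
  exists r c, 0 < r /\ has_pseries_on f x r c.

Lemma analytic_at_of_real_analytic_on f a b x :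
  real_analytic_on f a b -> a < x < b -> analytic_at f x.
Proof.
  intros Hf Hx. destruct (Hf x Hx) as [r [Hr [c Hc]]].
  exists r, c. split; [exact Hr|]. intros y Hy. apply is_pseries_Reals, Hc, Hy.
Qed.

Lemma CV_radius_gt_of_ex_pseries (c : nat -> R) (r : R) :
  (forall t, Rabs t < r -> ex_pseries c t) ->
  forall x, Rabs x < r -> Rbar_lt (Rabs x) (CV_radius c).
Proof.
  intros Hc x Hx.
  set (t := (Rabs x + r) / 2).
  assert (Ht : Rabs t < r) by (unfold t; rewrite Rabs_pos_eq; pose proof (Rabs_pos x); lra).
  assert (Hlim : Un_cv (fun n => Rabs (c n * t ^ n)) 0).
  { apply is_lim_seq_Reals. rewrite <- Rabs_R0.
    apply (is_lim_seq_abs _ 0), ex_series_lim_0, ex_pseries_R, Hc, Ht. }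
  destruct (cauchy_bound _ (CV_Cauchy _ (exist _ 0 Hlim))) as [M HM].
  assert (Hle : Rbar_le t (CV_radius c)).
  { apply (CV_radius_bounded c). exists M. intros n. apply HM. exists n. reflexivity. }
  unfold t in Hle. destruct (CV_radius c); simpl in *; try easy. lra.
Qed.

Section PowerSeriesExpansion.
Variables (f : R -> R) (x r : R) (c : nat -> R).
Hypothesis Hf : has_pseries_on f x r c.

Lemma has_pseries_on_radius y :
  Rabs (y - x) < r -> Rbar_lt (Rabs (y - x)) (CV_radius c).
Proof.
  apply CV_radius_gt_of_ex_pseries. intros t Ht. exists (f (t + x)).
  specialize (Hf (t + x)). replace (t + x - x) with t in Hf by ring. exact (Hf Ht).
Qed.

Lemma has_pseries_on_locally y :
  Rabs (y - x) < r -> locally y (fun z => f z = PSeries c (z + - x)).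
Proof.
  intros Hy. assert (He : 0 < r - Rabs (y - x)) by lra.
  exists (mkposreal _ He). intros z Hz. change (Rabs (z - y) < r - Rabs (y - x)) in Hz.
  symmetry. apply is_pseries_unique, Hf.
  replace (z - x) with ((z - y) + (y - x)) by ring.
  eapply Rle_lt_trans; [apply Rabs_triang|]. lra.
Qed.

Lemma has_pseries_on_Derive_n y n :
  Rabs (y - x) < r -> Derive_n f n y = PSeries (PS_derive_n n c) (y - x).
Proof.
  intros Hy. rewrite (Derive_n_ext_loc _ _ n y (has_pseries_on_locally y Hy)).
  rewrite Derive_n_comp_trans. apply Derive_n_PSeries, has_pseries_on_radius, Hy.
Qed.

Lemma has_pseries_on_ex_derive_n y n :
  Rabs (y - x) < r -> ex_derive_n f n y.
Proof.
  intros Hy. apply (ex_derive_n_ext_loc (fun z => PSeries c (z + - x))).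
  - eapply filter_imp; [|exact (has_pseries_on_locally y Hy)]. intros z Hz. now symmetry.
  - apply ex_derive_n_comp_trans, ex_derive_n_PSeries, has_pseries_on_radius, Hy.
Qed.

Lemma has_pseries_on_Derive_n_center n :
  0 < r -> Derive_n f n x = c n * INR (fact n).
Proof.
  intros Hr. assert (Hx : Rabs (x - x) < r) by (now rewrite Rminus_eq_0, Rabs_R0).
  rewrite (Derive_n_ext_loc _ _ n x (has_pseries_on_locally x Hx)), Derive_n_comp_trans.
  rewrite Rplus_opp_r. apply Derive_n_coef.
  rewrite <- Rabs_R0, <- (Rminus_eq_0 x). apply has_pseries_on_radius, Hx.
Qed.
End PowerSeriesExpansion.

Lemma is_pseries_scale_arg (c : nat -> R) s t l :
  is_pseries c (s * t) l -> is_pseries (fun n => c n * s ^ n) t l.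
Proof.
  intros H. apply is_pseries_R in H. apply is_pseries_R.
  eapply is_series_ext; [|exact H]. intros n. simpl. rewrite Rpow_mult_distr. ring.
Qed.

Lemma is_pseries_zero (t : R) : is_pseries (fun _ => 0) t 0.
Proof.
  apply is_pseries_Reals. intros e He. exists O. intros n _.
  unfold R_dist. rewrite sum_eq_R0 by (intros; ring). rewrite Rminus_0_r, Rabs_R0. exact He.
Qed.

Lemma has_pseries_on_le f x r r' c :
  r' <= r -> has_pseries_on f x r c -> has_pseries_on f x r' c.
Proof. intros Hr Hf y Hy. apply Hf. lra. Qed.

Lemma has_pseries_on_plus f g x r a b :
  has_pseries_on f x r a -> has_pseries_on g x r b ->
  has_pseries_on (fun y => f y + g y) x r (fun n => a n + b n).
Proof. intros Hf Hg y Hy. exact (is_pseries_plus _ _ _ _ _ (Hf y Hy) (Hg y Hy)). Qed.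

Lemma has_pseries_on_scal s f x r c :
  has_pseries_on f x r c -> has_pseries_on (fun y => s * f y) x r (fun n => s * c n).
Proof. intros Hf y Hy. exact (is_pseries_scal s c _ _ (Rmult_comm _ _) (Hf y Hy)). Qed.

Lemma has_pseries_on_comp_affine f m s x r r' c :
  Rabs s * r' < r -> has_pseries_on f (m + s * x) r c ->
  has_pseries_on (fun w => f (m + s * w)) x r' (fun n => c n * s ^ n).
Proof.
  intros Hr Hf y Hy. apply is_pseries_scale_arg.
  replace (s * (y - x)) with (m + s * y - (m + s * x)) by ring. apply Hf.
  replace (m + s * y - (m + s * x)) with (s * (y - x)) by ring. rewrite Rabs_mult.
  eapply Rle_lt_trans; [|exact Hr]. apply Rmult_le_compat_l; [apply Rabs_pos | lra].
Qed.

Lemma has_pseries_on_sum (l : list nat) (F : nat -> R -> R) (a : nat -> nat -> R) x r :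
  (forall k, In k l -> has_pseries_on (F k) x r (a k)) ->
  has_pseries_on (fun y => fold_right Rplus 0 (map (fun k => F k y) l)) x r
    (fun n => fold_right Rplus 0 (map (fun k => a k n) l)).
Proof.
  induction l as [|k l IH]; intros Hl.
  - intros y _. apply is_pseries_zero.
  - apply (has_pseries_on_plus (F k)); [apply Hl; now left|].
    apply IH. intros j Hj. apply Hl. now right.
Qed.

Lemma analytic_at_sum (l : list nat) (F : nat -> R -> R) x :
  (forall k, In k l -> analytic_at (F k) x) ->
  analytic_at (fun y => fold_right Rplus 0 (map (fun k => F k y) l)) x.
Proof.
  induction l as [|k l IH]; intros Hl.
  - exists 1, (fun _ => 0). split; [lra|]. intros y _. apply is_pseries_zero.
  - destruct (Hl k (or_introl eq_refl)) as [r1 [c1 [Hr1 Hc1]]].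
    destruct IH as [r2 [c2 [Hr2 Hc2]]]; [intros j Hj; apply Hl; now right|].
    exists (Rmin r1 r2), (fun n => c1 n + c2 n). split; [now apply Rmin_pos|].
    apply (has_pseries_on_plus (F k)).
    + apply (has_pseries_on_le _ _ r1); [apply Rmin_l | exact Hc1].
    + apply (has_pseries_on_le _ _ r2); [apply Rmin_r | exact Hc2].
Qed.

Lemma analytic_at_scal_comp_affine f mu m s x :
  analytic_at f (m + s * x) -> analytic_at (fun w => mu * f (m + s * w)) x.
Proof.
  intros [r [c [Hr Hc]]].
  assert (Hs : 0 < Rabs s + 1) by (pose proof (Rabs_pos s); lra).
  exists (r / (Rabs s + 1)), (fun n => mu * (c n * s ^ n)).
  split; [apply Rdiv_lt_0_compat; lra|].
  apply has_pseries_on_scal, (has_pseries_on_comp_affine _ _ _ _ r); [|exact Hc].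
  apply (Rmult_lt_reg_r (Rabs s + 1)); [exact Hs|].
  field_simplify; [|lra]. pose proof (Rabs_pos s). nra.
Qed.

(** * Dilation combinations and power sums *)

Definition dilation_comb (rho : R -> R) (m : R) (mu : nat -> R) (K : nat) (w : R) : R :=
  fold_right Rplus 0 (map (fun k => mu k * rho (m + INR k * w)) (seq 1 K)).

Definition power_sum (mu : nat -> R) (K n : nat) : R :=
  fold_right Rplus 0 (map (fun k => mu k * INR k ^ n) (seq 1 K)).

Lemma analytic_at_dilation_comb rho m mu K w :
  (forall k, In k (seq 1 K) -> analytic_at rho (m + INR k * w)) ->
  analytic_at (dilation_comb rho m mu K) w.
Proof.
  intros Hrho. apply (analytic_at_sum _ (fun k w => mu k * rho (m + INR k * w))).
  intros k Hk. apply analytic_at_scal_comp_affine, Hrho, Hk.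
Qed.

Lemma Derive_n_dilation_comb_0 rho m mu K r c n :
  0 < r -> has_pseries_on rho m r c ->
  Derive_n (dilation_comb rho m mu K) n 0 = c n * power_sum mu K n * INR (fact n).
Proof.
  intros Hr Hc. pose proof (pos_INR K) as HK. set (r' := r / (INR K + 1)).
  assert (Hr' : 0 < r') by (unfold r'; apply Rdiv_lt_0_compat; lra).
  assert (Hrr : r' * (INR K + 1) = r) by (unfold r'; field; lra).
  assert (Hs : has_pseries_on (dilation_comb rho m mu K) 0 r'
                 (fun n => fold_right Rplus 0 (map (fun k => mu k * (c n * INR k ^ n)) (seq 1 K)))).
  { apply (has_pseries_on_sum _ (fun k w => mu k * rho (m + INR k * w))).
    intros k Hk. apply has_pseries_on_scal, (has_pseries_on_comp_affine _ _ _ _ r).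
    - apply in_seq in Hk. rewrite Rabs_pos_eq by apply pos_INR.
      assert (INR k <= INR K) by (apply le_INR; lia). nra.
    - now rewrite Rmult_0_r, Rplus_0_r. }
  rewrite (has_pseries_on_Derive_n_center _ _ _ _ Hs n Hr'). f_equal.
  unfold power_sum. clear Hs. induction (seq 1 K) as [|k l IH]; simpl; [ring|].
  rewrite IH. set (s := fold_right _ _ _). ring.
Qed.

Lemma power_sum_S mu K n :
  power_sum mu (S K) n = power_sum mu K n + mu (S K) * INR (S K) ^ n.
Proof.
  unfold power_sum. rewrite seq_S, map_app, fold_right_app. simpl.
  replace (1 + K)%nat with (S K) by lia. set (t := mu (S K) * _).
  generalize (seq 1 K). intros l. induction l as [|k l IH]; simpl; [ring|].
  rewrite IH. set (s := fold_right _ _ _). ring.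
Qed.

Lemma power_sum_abs_ge0 mu K n : 0 <= power_sum (fun k => Rabs (mu k)) K n.
Proof.
  induction K as [|K IH]; [apply Rle_refl|]. rewrite power_sum_S.
  pose proof (Rabs_pos (mu (S K))). pose proof (pow_le _ n (pos_INR (S K))). nra.
Qed.

Lemma Rabs_power_sum_le mu K n :
  Rabs (power_sum mu K n) <= power_sum (fun k => Rabs (mu k)) K 0 * INR K ^ n.
Proof.
  induction K as [|K IH]; [unfold power_sum; simpl; rewrite Rabs_R0; lra|].
  rewrite !power_sum_S. eapply Rle_trans; [apply Rabs_triang|].
  rewrite Rabs_mult, (Rabs_pos_eq (INR (S K) ^ n)) by (apply pow_le, pos_INR).
  assert (Hpow : INR K ^ n <= INR (S K) ^ n)
    by (apply pow_incr; split; [apply pos_INR | apply le_INR; lia]).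
  pose proof (Rmult_le_compat_l _ _ _ (power_sum_abs_ge0 mu K 0) Hpow).
  rewrite pow_O. lra.
Qed.

Lemma power_sum_eventually_nonzero mu K :
  (exists k, (1 <= k <= K)%nat /\ mu k <> 0) ->
  exists N, forall n, (N <= n)%nat -> power_sum mu K n <> 0.
Proof.
  induction K as [|K IH]; intros [k [Hk Hmu]]; [lia|].
  destruct (Req_dec (mu (S K)) 0) as [Hz|Hnz].
  - destruct IH as [N HN].
    + exists k. split; [|exact Hmu]. destruct (Nat.eq_dec k (S K)); [subst; contradiction | lia].
    + exists N. intros n Hn. rewrite power_sum_S, Hz, Rmult_0_l, Rplus_0_r. apply HN, Hn.
  - set (M := power_sum (fun k => Rabs (mu k)) K 0).
    assert (HM : 0 <= M) by apply power_sum_abs_ge0.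
    assert (HK : 0 < INR (S K)) by (apply lt_0_INR; lia).
    set (q := INR K / INR (S K)).
    assert (Hq : 0 <= q < 1).
    { unfold q. rewrite S_INR in *. pose proof (pos_INR K). split.
      - apply Rmult_le_pos; [lra | apply Rlt_le, Rinv_0_lt_compat; lra].
      - apply (Rmult_lt_reg_r (INR K + 1)); [lra|].
        unfold Rdiv. rewrite Rmult_assoc, Rinv_l; lra. }
    assert (Hmu' : 0 < Rabs (mu (S K))) by (apply Rabs_pos_lt, Hnz).
    destruct (pow_lt_1_zero q ltac:(rewrite Rabs_pos_eq; lra) (Rabs (mu (S K)) / (M + 1)))
      as [N HN]; [apply Rdiv_lt_0_compat; lra|].
    exists N. intros n Hn Hsum. specialize (HN n Hn).
    rewrite Rabs_pos_eq in HN by (apply pow_le; lra).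
    pose proof (Rabs_power_sum_le mu K n) as Hb. fold M in Hb.
    replace (INR K) with (q * INR (S K)) in Hb by (unfold q; field; lra).
    rewrite Rpow_mult_distr in Hb. rewrite power_sum_S in Hsum.
    replace (power_sum mu K n) with (- (mu (S K) * INR (S K) ^ n)) in Hb by lra.
    rewrite Rabs_Ropp, Rabs_mult, (Rabs_pos_eq (INR (S K) ^ n)) in Hb by (apply pow_le; lra).
    assert (Hp : 0 < INR (S K) ^ n) by (apply pow_lt, HK).
    assert (Hqn : 0 <= q ^ n) by (apply pow_le; lra).
    apply (Rmult_lt_compat_r (M + 1)) in HN; [|lra].
    unfold Rdiv in HN. rewrite Rmult_assoc, Rinv_l, Rmult_1_r in HN by lra.
    nra.
Qed.

(** * The identity theorem *)

Lemma continuous_zero_of_near_zeros (h : R -> R) x :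
  continuous h x -> (forall e, 0 < e -> exists t, Rabs (t - x) < e /\ h t = 0) -> h x = 0.
Proof.
  intros Hc Hz. destruct (Req_dec (h x) 0) as [|Hne]; [assumption | exfalso].
  destruct (Hc _ (locally_ball (h x) (mkposreal _ (Rabs_pos_lt _ Hne)))) as [d Hd].
  destruct (Hz d (cond_pos d)) as [t [Ht Ht0]].
  specialize (Hd t Ht). change (Rabs (h t - h x) < Rabs (h x)) in Hd.
  rewrite Ht0, Rminus_0_l, Rabs_Ropp in Hd. lra.
Qed.

Lemma Rolle_Derive (h : R -> R) z1 z2 :
  z1 < z2 -> (forall y, z1 <= y <= z2 -> ex_derive h y) -> h z1 = 0 -> h z2 = 0 ->
  exists c, z1 <= c <= z2 /\ Derive h c = 0.
Proof.
  intros Hz Hd H1 H2.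
  destruct (MVT_gen h z1 z2 (Derive h)) as [c [Hc Hmvt]];
    rewrite Rmin_left, Rmax_right in * by lra.
  - intros y Hy. apply Derive_correct, Hd. lra.
  - intros y Hy. apply continuity_pt_filterlim, (ex_derive_continuous h), Hd, Hy.
  - exists c. split; [exact Hc|]. rewrite H1, H2 in Hmvt.
    apply (Rmult_eq_reg_r (z2 - z1)); lra.
Qed.

Lemma Derive_n_zero_of_right_zeros (g : R -> R) w r :
  0 < r -> (forall y, Rabs (y - w) < r -> forall n, ex_derive_n g n y) ->
  (forall e, 0 < e -> exists z, w < z < w + e /\ g z = 0) ->
  forall n, Derive_n g n w = 0.
Proof.
  intros Hr Hs Hz.
  (* Rolle between two zeros of the n-th derivative close to the right of w. *)
  assert (Hzn : forall n e, 0 < e -> exists z, w < z < w + e /\ Derive_n g n z = 0).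
  { induction n as [|n IH]; [exact Hz|]. intros e He.
    destruct (IH (Rmin e r)) as [z1 [Hz1 Hg1]]; [now apply Rmin_pos|].
    destruct (IH (z1 - w)) as [z2 [Hz2 Hg2]]; [lra|].
    pose proof (Rmin_l e r). pose proof (Rmin_r e r).
    destruct (Rolle_Derive (Derive_n g n) z2 z1) as [c [Hc Hgc]]; [lra | | exact Hg2 | exact Hg1 |].
    - intros y Hy. refine (Hs y _ (S n)). rewrite Rabs_pos_eq; lra.
    - exists c. split; [lra | exact Hgc]. }
  intros n. apply continuous_zero_of_near_zeros.
  - assert (Hw : Rabs (w - w) < r) by now rewrite Rminus_eq_0, Rabs_R0.
    exact (ex_derive_continuous (Derive_n g n) w (Hs w Hw (S n))).
  - intros e He. destruct (Hzn n e He) as [z [Hz' Hgz]].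
    exists z. split; [rewrite Rabs_pos_eq; lra | exact Hgz].
Qed.

Section IntervalConnected.
Variables (A : R -> Prop) (a b : R).
Hypothesis A_open :
  forall x, a < x < b -> A x -> exists r, 0 < r /\ forall y, Rabs (y - x) < r -> A y.
Hypothesis A_closed :
  forall x, a < x < b -> (forall e, 0 < e -> exists t, Rabs (t - x) < e /\ A t) -> A x.

Lemma interval_clopen_right x1 x2 : a < x1 -> x1 <= x2 < b -> A x1 -> A x2.
Proof.
  intros Hx1 Hx2 HA1.
  set (E := fun y => x1 <= y <= x2 /\ forall t, x1 <= t <= y -> A t).
  assert (HE1 : E x1) by (split; [lra | intros t Ht; now replace t with x1 by lra]).
  destruct (completeness E) as [s [Hub Hlub]];
    [exists x2; intros y [Hy _]; lra | now exists x1 |].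
  assert (Hs1 : x1 <= s) by now apply Hub.
  assert (Hs2 : s <= x2) by (apply Hlub; intros y [Hy _]; lra).
  assert (Hbelow : forall t, x1 <= t < s -> A t).
  { intros t Ht. apply NNPP. intros HAt. assert (s <= t); [|lra].
    apply Hlub. intros y [Hy HAy]. destruct (Rle_dec y t) as [|Hyt]; [assumption|].
    exfalso. apply HAt, HAy. lra. }
  assert (HAs : A s).
  { destruct (Req_dec s x1) as [->|Hne]; [exact HA1|].
    apply A_closed; [lra|]. intros e He. exists (Rmax x1 (s - e / 2)).
    unfold Rmax; destruct (Rle_dec x1 (s - e / 2)); split;
      try (rewrite Rabs_left1; lra); apply Hbelow; lra. }
  destruct (Req_dec s x2) as [<-|Hne]; [exact HAs | exfalso].
  destruct (A_open s ltac:(lra) HAs) as [r [Hr HAr]].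
  set (y := s + Rmin r (x2 - s) / 2).
  assert (Hm : 0 < Rmin r (x2 - s) <= r /\ Rmin r (x2 - s) <= x2 - s).
  { split; [split; [apply Rmin_pos; lra | apply Rmin_l] | apply Rmin_r]. }
  assert (HEy : E y).
  { split; [unfold y; lra|]. intros t Ht. destruct (Rlt_dec t s); [apply Hbelow; lra|].
    apply HAr. unfold y in Ht. rewrite Rabs_pos_eq; lra. }
  assert (y <= s) by now apply Hub. unfold y in *. lra.
Qed.

End IntervalConnected.

Lemma interval_clopen (A : R -> Prop) a b x1 :
  (forall x, a < x < b -> A x -> exists r, 0 < r /\ forall y, Rabs (y - x) < r -> A y) ->
  (forall x, a < x < b -> (forall e, 0 < e -> exists t, Rabs (t - x) < e /\ A t) -> A x) ->
  a < x1 < b -> A x1 -> forall x, a < x < b -> A x.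
Proof.
  intros Hop Hcl Hx1 HA1 x Hx. destruct (Rle_dec x1 x).
  - apply (interval_clopen_right A a b Hop Hcl x1); auto; lra.
  - rewrite <- (Ropp_involutive x).
    apply (interval_clopen_right (fun y => A (- y)) (- b) (- a)) with (- x1); try lra.
    + intros y Hy HAy. destruct (Hop (- y) ltac:(lra) HAy) as [r [Hr Hr']].
      exists r. split; [exact Hr|]. intros z Hz. apply Hr'.
      replace (- z - - y) with (- (z - y)) by ring. now rewrite Rabs_Ropp.
    + intros y Hy Hnear. apply Hcl; [lra|]. intros e He.
      destruct (Hnear e He) as [t [Ht HAt]]. exists (- t). split; [|exact HAt].
      replace (- t - - y) with (- (t - y)) by ring. now rewrite Rabs_Ropp.
    + now rewrite Ropp_involutive.
Qed.

Lemma analytic_at_ex_derive_n f x n : analytic_at f x -> ex_derive_n f n x.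
Proof.
  intros [r [c [Hr Hc]]]. apply (has_pseries_on_ex_derive_n _ _ _ _ Hc).
  now rewrite Rminus_eq_0, Rabs_R0.
Qed.

Lemma Derive_n_zero_propagates f a b N x1 :
  (forall x, a < x < b -> analytic_at f x) -> a < x1 < b ->
  (forall n, (N <= n)%nat -> Derive_n f n x1 = 0) ->
  forall x, a < x < b -> forall n, (N <= n)%nat -> Derive_n f n x = 0.
Proof.
  intros Hf Hx1 H1.
  apply (interval_clopen (fun y => forall n, (N <= n)%nat -> Derive_n f n y = 0) a b x1);
    [| |exact Hx1 | exact H1].
  - intros x Hx HA. destruct (Hf x Hx) as [r [c [Hr Hc]]].
    assert (Hc0 : forall n, (N <= n)%nat -> c n = 0).
    { intros n Hn. pose proof (HA n Hn) as H0.
      rewrite (has_pseries_on_Derive_n_center _ _ _ _ Hc n Hr) in H0.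
      apply Rmult_integral in H0. destruct H0 as [H0|H0]; [exact H0|].
      now apply INR_fact_neq_0 in H0. }
    exists r. split; [exact Hr|]. intros y Hy n Hn.
    rewrite (has_pseries_on_Derive_n _ _ _ _ Hc y n Hy), <- (PSeries_const_0 (y - x)).
    apply PSeries_ext. intros k. unfold PS_derive_n. rewrite Hc0 by lia. ring.
  - intros x Hx Hnear n Hn. apply continuous_zero_of_near_zeros.
    + apply (ex_derive_continuous (Derive_n f n)), (analytic_at_ex_derive_n f x (S n)), Hf, Hx.
    + intros e He. destruct (Hnear e He) as [t [Ht HAt]].
      exists t. split; [exact Ht | now apply HAt].
Qed.

Lemma Derive_n_zero_of_analytic_right_zeros f a b w :
  (forall x, a < x < b -> analytic_at f x) -> a < w < b ->
  (forall e, 0 < e -> exists z, w < z < w + e /\ f z = 0) ->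
  forall x, a < x < b -> forall n, Derive_n f n x = 0.
Proof.
  intros Hf Hw Hz x Hx n. destruct (Hf w Hw) as [r [c [Hr Hc]]].
  apply (Derive_n_zero_propagates f a b 0 w Hf Hw); [|exact Hx | lia].
  intros k _. apply (Derive_n_zero_of_right_zeros f w r Hr); [|exact Hz].
  intros y Hy j. exact (has_pseries_on_ex_derive_n _ _ _ _ Hc y j Hy).
Qed.

Lemma Derive_n_Derive f n x : Derive_n (Derive f) n x = Derive_n f (S n) x.
Proof. rewrite <- Nat.add_1_r. apply (Derive_n_comp f n 1). Qed.

Lemma is_derive_zero_const h a b x0 x :
  (forall y, a < y < b -> is_derive h y 0) -> a < x0 < b -> a < x < b -> h x = h x0.
Proof.
  intros Hh Hx0 Hx.
  assert (Hin : forall y, Rmin x0 x <= y <= Rmax x0 x -> a < y < b).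
  { intros y Hy. unfold Rmin, Rmax in Hy. destruct (Rle_dec x0 x); lra. }
  destruct (MVT_gen h x0 x (fun _ => 0)) as [c [_ Hc]]; [| |lra].
  - intros y Hy. apply Hh, Hin. lra.
  - intros y Hy. apply continuity_pt_filterlim, (ex_derive_continuous h).
    exists 0. apply Hh, Hin, Hy.
Qed.

Definition antiderivative_coef (c0 : R) (d : nat -> R) (i : nat) : R :=
  match i with O => c0 | S j => d j / INR (S j) end.

Lemma is_derive_antiderivative c0 (d : nat -> R) N x :
  is_derive (fun x => sum_f_R0 (fun i => antiderivative_coef c0 d i * x ^ i) (S N)) x
    (sum_f_R0 (fun i => d i * x ^ i) N).
Proof.
  induction N as [|N IH].
  - simpl. auto_derive; [exact I|]. simpl. field.
  - apply (is_derive_plus (fun x => sum_f_R0 (fun i => antiderivative_coef c0 d i * x ^ i) (S N))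
            (fun x => antiderivative_coef c0 d (S (S N)) * x ^ (S (S N)))); [exact IH|].
    assert (HN : INR (S (S N)) <> 0) by (apply not_0_INR; lia).
    simpl antiderivative_coef. auto_derive; [exact I|].
    change (match N with 0%nat => 1 | S _ => INR N + 1 end) with (INR (S N)).
    rewrite <- S_INR. simpl. field. exact HN.
Qed.

Lemma polynomial_of_Derive_n_zero N : forall f a b, a < b ->
  (forall x, a < x < b -> forall n, ex_derive (Derive_n f n) x) ->
  (forall x, a < x < b -> Derive_n f N x = 0) ->
  exists c : nat -> R, forall x, a < x < b -> f x = sum_f_R0 (fun i => c i * x ^ i) N.
Proof.
  induction N as [|N IH]; intros f a b Hab Hs HN.
  - exists (fun _ => 0). intros x Hx. simpl. rewrite <- (HN x Hx). simpl. ring.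
  - destruct (IH (Derive f) a b Hab) as [d Hd].
    + intros x Hx n. apply (ex_derive_ext (Derive_n f (S n))).
      * intros t. symmetry. apply Derive_n_Derive.
      * apply Hs, Hx.
    + intros x Hx. rewrite Derive_n_Derive. apply HN, Hx.
    + set (P := fun c0 x => sum_f_R0 (fun i => antiderivative_coef c0 d i * x ^ i) (S N)).
      assert (HP : forall c0 x, P c0 x = c0 + P 0 x).
      { intros c0 x. unfold P. rewrite !(decomp_sum _ (S N)) by lia. simpl. ring. }
      set (x0 := (a + b) / 2).
      assert (Hconst : forall x, a < x < b -> f x - P 0 x = f x0 - P 0 x0).
      { intros x Hx.
        apply (is_derive_zero_const (fun x => f x - P 0 x) a b); [|unfold x0; lra | exact Hx].
        intros y Hy.
        pose proof (is_derive_minus f (P 0) y _ _ (Derive_correct _ _ (Hs y Hy 0%nat))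
                      (is_derive_antiderivative 0 d N y)) as H.
        change (Derive (Derive_n f 0) y) with (Derive f y) in H.
        rewrite (Hd y Hy), minus_eq_zero in H. exact H. }
      exists (antiderivative_coef (f x0 - P 0 x0) d). intros x Hx.
      change (f x = P (f x0 - P 0 x0) x). rewrite HP, <- (Hconst x Hx). ring.
Qed.

Lemma analytic_polynomial_on f a b x0 N :
  (forall x, a < x < b -> analytic_at f x) -> a < x0 < b ->
  (forall n, (N <= n)%nat -> Derive_n f n x0 = 0) -> polynomial_on f a b.
Proof.
  intros Hf Hx0 HN. destruct (polynomial_of_Derive_n_zero N f a b) as [c Hc].
  - lra.
  - intros x Hx n. exact (analytic_at_ex_derive_n f x (S n) (Hf x Hx)).
  - intros x Hx. exact (Derive_n_zero_propagates f a b N x0 Hf Hx0 HN x Hx N (le_n N)).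
  - now exists N, c.
Qed.

(** * The Baire category argument *)

Lemma nested_intervals_common_point (u v : nat -> R) :
  Un_growing u -> Un_decreasing v -> (forall n, u n <= v n) ->
  exists x, forall n, u n <= x <= v n.
Proof.
  intros Hu Hv Huv.
  assert (Hle : forall i j, u i <= v j).
  { intros i j. destruct (Nat.le_ge_cases i j) as [Hij|Hij].
    - pose proof (growing_prop u j i Hu Hij). specialize (Huv j). lra.
    - pose proof (decreasing_prop v j i Hv Hij). specialize (Huv i). lra. }
  destruct (completeness (fun x => exists n, x = u n)) as [x [Hub Hlub]].
  - exists (v O). intros y [n ->]. apply Hle.
  - now exists (u O), O.
  - exists x. intros n. split.
    + apply Hub. now exists n.
    + apply Hlub. intros y [i ->]. apply Hle.
Qed.

Definition shrink (g u v : R) : R * R :=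
  let w := (u + v) / 2 in let e := Rmin g ((v - u) / 2) in (w + e / 3, w + 2 * e / 3).

Lemma shrink_spec g u v : 0 < g -> u < v ->
  u <= fst (shrink g u v) < snd (shrink g u v) /\ snd (shrink g u v) <= v /\
  forall z, fst (shrink g u v) <= z <= snd (shrink g u v) -> (u + v) / 2 < z < (u + v) / 2 + g.
Proof.
  intros Hg Huv. unfold shrink; simpl.
  pose proof (Rmin_l g ((v - u) / 2)). pose proof (Rmin_r g ((v - u) / 2)).
  assert (0 < Rmin g ((v - u) / 2)) by (apply Rmin_pos; lra).
  split; [lra | split; [lra|]]. intros z Hz. lra.
Qed.

Fixpoint shrink_iter (gap : nat -> R -> R) (I0 : R * R) (n : nat) : R * R :=
  match n with
  | O => I0
  | S j => let I := shrink_iter gap I0 j in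
           shrink (gap j ((fst I + snd I) / 2)) (fst I) (snd I)
  end.

Lemma countable_cover_right_accumulation (Z : nat -> R -> Prop) a b :
  a < b -> (forall x, a < x < b -> exists j, Z j x) ->
  exists j x, a < x < b /\ forall e, 0 < e -> exists z, x < z < x + e /\ Z j z.
Proof.
  (* Otherwise every Z j leaves a gap to the right of each point; nested intervals, the j-th one
     avoiding Z j, shrink to a point covered by no Z j. *)
  intros Hab Hcover. apply NNPP. intros Hno.
  assert (Hgap : forall j x, exists g, 0 < g /\ (a < x < b -> forall z, x < z < x + g -> ~ Z j z)).
  { intros j x.
    destruct (classic (exists g, 0 < g /\ forall z, x < z < x + g -> ~ Z j z)) as [[g Hg]|Hn].
    - exists g. tauto.
    - exists 1. split; [lra|]. intros Hx. exfalso. apply Hno. exists j, x. split; [exact Hx|].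
      intros e He. apply NNPP. intros Hz. apply Hn. exists e. split; [exact He|].
      intros z Hze HZ. apply Hz. now exists z. }
  set (gap := fun j x => proj1_sig (constructive_indefinite_description _ (Hgap j x))).
  assert (Hgap_spec : forall j x,
            0 < gap j x /\ (a < x < b -> forall z, x < z < x + gap j x -> ~ Z j z))
    by (intros; exact (proj2_sig (constructive_indefinite_description _ (Hgap j x)))).
  set (I := shrink_iter gap ((3 * a + b) / 4, (a + 3 * b) / 4)).
  assert (Hinv : forall n, a < fst (I n) /\ fst (I n) < snd (I n) /\ snd (I n) < b).
  { induction n as [|n IH]; [simpl; lra|].
    destruct (shrink_spec (gap n ((fst (I n) + snd (I n)) / 2)) (fst (I n)) (snd (I n)))
      as [H1 [H2 _]]; [apply Hgap_spec | lra |].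
    change (I (S n)) with (shrink (gap n ((fst (I n) + snd (I n)) / 2)) (fst (I n)) (snd (I n))).
    lra. }
  assert (Hstep : forall n, fst (I n) <= fst (I (S n)) /\ snd (I (S n)) <= snd (I n) /\
                            forall z, fst (I (S n)) <= z <= snd (I (S n)) -> ~ Z n z).
  { intros n. pose proof (Hinv n) as Hn. set (w := (fst (I n) + snd (I n)) / 2).
    destruct (shrink_spec (gap n w) (fst (I n)) (snd (I n))) as [H1 [H2 H3]];
      [apply Hgap_spec | lra |].
    change (I (S n)) with (shrink (gap n w) (fst (I n)) (snd (I n))).
    split; [lra | split; [lra|]]. intros z Hz.
    apply (proj2 (Hgap_spec n w)); [unfold w; lra | now apply H3]. }
  destruct (nested_intervals_common_point (fun n => fst (I n)) (fun n => snd (I n))) as [x Hx].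
  - intros n. apply Hstep.
  - intros n. apply Hstep.
  - intros n. pose proof (Hinv n). lra.
  - assert (Hxab : a < x < b) by (pose proof (Hinv 0%nat); pose proof (Hx 0%nat); lra).
    destruct (Hcover x Hxab) as [j Hj]. exact (proj2 (proj2 (Hstep j)) x (Hx (S j)) Hj).
Qed.

Definition nat_to_Z (n : nat) : Z :=
  let (p, q) := Cantor.of_nat n in (Z.of_nat p - Z.of_nat q)%Z.

Definition nat_to_Q (n : nat) : Q :=
  let (p, q) := Cantor.of_nat n in Qmake (nat_to_Z p) (Pos.of_succ_nat q).

Fixpoint nth_code (n k : nat) : nat :=
  match k with
  | O => fst (Cantor.of_nat n)
  | S k => nth_code (snd (Cantor.of_nat n)) k
  end.

Definition nat_to_Qseq (n : nat) (k : nat) : Q := nat_to_Q (nth_code n k).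

Lemma nat_to_Z_surj z : exists n, nat_to_Z n = z.
Proof.
  exists (Cantor.to_nat (Z.to_nat z, Z.to_nat (- z))).
  unfold nat_to_Z. rewrite Cantor.cancel_of_to. lia.
Qed.

Lemma nat_to_Q_surj q : exists n, nat_to_Q n = q.
Proof.
  destruct q as [z p]. destruct (nat_to_Z_surj z) as [a Ha].
  exists (Cantor.to_nat (a, Nat.pred (Pos.to_nat p))).
  unfold nat_to_Q. rewrite Cantor.cancel_of_to, Ha. f_equal.
  apply SuccNat2Pos.inv. pose proof (Pos2Nat.is_pos p). lia.
Qed.

Lemma nat_to_Qseq_prefix_surj K (lam : nat -> Q) :
  exists n, forall k, (k <= K)%nat -> nat_to_Qseq n k = lam k.
Proof.
  revert lam. induction K as [|K IH]; intros lam; destruct (nat_to_Q_surj (lam O)) as [a Ha].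
  - exists (Cantor.to_nat (a, O)). intros k Hk. replace k with O by lia.
    unfold nat_to_Qseq. cbn [nth_code]. now rewrite Cantor.cancel_of_to.
  - destruct (IH (fun k => lam (S k))) as [n Hn].
    exists (Cantor.to_nat (a, n)).
    intros [|k] Hk; unfold nat_to_Qseq; cbn [nth_code]; rewrite Cantor.cancel_of_to; cbn [fst snd].
    + exact Ha.
    + apply Hn. lia.
Qed.

Definition rational_comb (lam : nat -> Q) (a : nat -> R) (K : nat) : R :=
  fold_right Rplus 0 (map (fun k => Q2R (lam k) * a k) (seq 1 K)).

Definition nontrivial (lam : nat -> Q) (K : nat) : Prop :=
  exists k, (1 <= k <= K)%nat /\ ~ (lam k == 0)%Q.

Lemma qcomb_ext lam lam' a K :
  (forall k, (k <= K)%nat -> lam k = lam' k) -> rational_comb lam a K = rational_comb lam' a K.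
Proof.
  intros H. unfold rational_comb. f_equal. apply map_ext_in. intros k Hk.
  apply in_seq in Hk. now rewrite H by lia.
Qed.

Lemma not_rationally_independent a K :
  ~ rationally_independent a K -> exists lam, nontrivial lam K /\ rational_comb lam a K = 0.
Proof.
  intros Hn. apply NNPP. intros Hno. apply Hn. intros lam Hlam k Hk.
  apply NNPP. intros Hk0. apply Hno. exists lam. split; [now exists k | exact Hlam].
Qed.

Lemma rational_relation_right_cluster (a : R -> nat -> R) K lo hi :
  lo < hi -> (forall w, lo < w < hi -> ~ rationally_independent (a w) K) ->
  exists lam, nontrivial lam K /\ exists ws, lo < ws < hi /\
    forall e, 0 < e -> exists z, ws < z < ws + e /\ rational_comb lam (a z) K = 0.
Proof.
  intros Hlh Hdep.
  destruct (countable_cover_right_accumulation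
              (fun j w => nontrivial (nat_to_Qseq j) K /\ rational_comb (nat_to_Qseq j) (a w) K = 0)
              lo hi Hlh)
    as [j [ws [Hws Hacc]]].
  - intros w Hw. destruct (not_rationally_independent _ _ (Hdep w Hw)) as [lam [[k [Hk Hk0]] Hlam]].
    destruct (nat_to_Qseq_prefix_surj K lam) as [j Hj]. exists j. split.
    + exists k. split; [exact Hk|]. rewrite Hj by lia. exact Hk0.
    + rewrite (qcomb_ext _ lam _ _ Hj). exact Hlam.
  - exists (nat_to_Qseq j). split.
    + destruct (Hacc 1 Rlt_0_1) as [z [_ [Hz _]]]. exact Hz.
    + exists ws. split; [exact Hws|]. intros e He.
      destruct (Hacc e He) as [z [Hz [_ Hz0]]]. now exists z.
Qed.

Lemma Derive_n_center_zero_of_dilation_comb rho m mu K r c n :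
  0 < r -> has_pseries_on rho m r c ->
  Derive_n (dilation_comb rho m mu K) n 0 = 0 -> power_sum mu K n <> 0 ->
  Derive_n rho n m = 0.
Proof.
  intros Hr Hc HG Hps.
  rewrite (Derive_n_dilation_comb_0 rho m mu K r c n Hr Hc) in HG.
  rewrite (has_pseries_on_Derive_n_center _ _ _ _ Hc n Hr).
  pose proof (INR_fact_neq_0 n) as Hfact.
  apply Rmult_integral in HG. destruct HG as [HG|]; [|contradiction].
  apply Rmult_integral in HG. destruct HG as [->|]; [ring | contradiction].
Qed.

Lemma dilation_in_interval alpha beta K k w :
  alpha < beta -> (1 <= k <= K)%nat ->
  - ((beta - alpha) / (2 * INR K)) < w < (beta - alpha) / (2 * INR K) ->
  alpha < (alpha + beta) / 2 + INR k * w < beta.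
Proof.
  intros Hab Hk Hw.
  assert (HK : 0 < INR K) by (apply lt_0_INR; lia).
  assert (Hkk : 0 <= INR k <= INR K) by (split; [apply pos_INR | apply le_INR; lia]).
  assert (HdK : (beta - alpha) / (2 * INR K) * INR K = (beta - alpha) / 2) by (field; lra).
  assert (Habs : Rabs (INR k * w) < (beta - alpha) / 2).
  { rewrite Rabs_mult, Rabs_pos_eq by lra. rewrite <- HdK.
    assert (Rabs w < (beta - alpha) / (2 * INR K)) by (apply Rabs_def1; lra).
    pose proof (Rabs_pos w). nra. }
  apply Rabs_def2 in Habs. lra.
Qed.

Theorem lemma3 (K : nat) (rho : R -> R) (alpha beta : R) :
  (1 <= K)%nat -> alpha < beta ->
  real_analytic_on rho alpha beta ->
  ~ polynomial_on rho alpha beta ->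
  exists w0,
    - ((beta - alpha) / (2 * INR K)) < w0 < (beta - alpha) / (2 * INR K) /\
    rationally_independent
      (fun k => rho ((alpha + beta) / 2 + INR k * w0)) K.
Proof.
  intros HK Hab Hrho Hnp.
  set (m := (alpha + beta) / 2). set (d := (beta - alpha) / (2 * INR K)).
  assert (Hd : 0 < d).
  { apply Rdiv_lt_0_compat; [lra|]. apply Rmult_lt_0_compat; [lra | apply lt_0_INR; lia]. }
  apply NNPP. intros Hno.
  destruct (rational_relation_right_cluster (fun w k => rho (m + INR k * w)) K (- d) d)
    as [lam [[k0 [Hk0 Hlam]] [ws [Hws Hzeros]]]];
    [lra | intros w Hw Hind; apply Hno; now exists w |].
  set (mu := fun k => Q2R (lam k)).
  assert (HG : forall w, - d < w < d -> analytic_at (dilation_comb rho m mu K) w).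
  { intros w Hw. apply analytic_at_dilation_comb. intros k Hk. apply in_seq in Hk.
    apply (analytic_at_of_real_analytic_on rho alpha beta), (dilation_in_interval _ _ K);
      [exact Hrho | exact Hab | lia | exact Hw]. }
  assert (Hm : alpha < m < beta) by (unfold m; lra).
  destruct (analytic_at_of_real_analytic_on rho alpha beta m Hrho Hm) as [r [c [Hr Hc]]].
  destruct (power_sum_eventually_nonzero mu K) as [N HN].
  { exists k0. split; [lia|]. intros H0. apply Hlam, eqR_Qeq. now rewrite RMicromega.Q2R_0. }
  apply Hnp, (analytic_polynomial_on rho alpha beta m N); [| exact Hm |].
  - intros x Hx. exact (analytic_at_of_real_analytic_on rho alpha beta x Hrho Hx).
  - intros n Hn.
    apply (Derive_n_center_zero_of_dilation_comb rho m mu K r c n Hr Hc); [|now apply HN].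
    apply (Derive_n_zero_of_analytic_right_zeros _ (- d) d ws HG Hws Hzeros). lra.
Qed.
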